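(* Let $G$ be a two-player game with strategy sets $S_1,S_2$, utilities $u_1,u_2$, and a nonempty set $\mathrm{NE}$ of pure Nash equilibria taken as the solution set. Suppose that for all $x,x'\in S_1$ and $y,y'\in S_2$, $$u_1(x,y)\le u_1(x',y)\ \text{and}\ u_2(x,y)\le u_2(x,y')\ \Longrightarrow\ \mathrm{sw}(x,y)\le\mathrm{sw}(x',y)\ \text{or}\ \mathrm{sw}(x,y)\le\mathrm{sw}(x,y').$$ Then $\mathrm{PoTS}=\mathrm{PoS}$.
   Context: $\mathrm{sw}=u_1+u_2$, assumed to have positive maximum over $S_1\times S_2$; minima/maxima are read as infima/suprema if not attained. $T(\mathrm{NE})$ is the set of profiles $(x,y)$ such that $x$ is player 1's strategy in some element of $\mathrm{NE}$ and $y$ is player 2's strategy in some element of $\mathrm{NE}$. $\mathrm{PoS}=\max_{\mathrm{NE}}\mathrm{sw}/\max_S\mathrm{sw}$ and $\mathrm{PoTS}=\max_{T(\mathrm{NE})}\mathrm{sw}/\max_S\mathrm{sw}$. *)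

From mathcomp Require Import all_boot all_order all_algebra.
From mathcomp Require Import all_classical all_reals.
Set Implicit Arguments. Unset Strict Implicit. Unset Printing Implicit Defensive.
Import Order.TTheory GRing.Theory Num.Theory.
Local Open Scope classical_set_scope.
Local Open Scope ring_scope.

Section Game.
Variables (R : realType) (S1 S2 : Type).
Variables (u1 u2 : S1 -> S2 -> R).

Definition sw (x : S1) (y : S2) : R := u1 x y + u2 x y.

Definition NE : set (S1 * S2) :=
  [set p | (forall x', u1 x' p.2 <= u1 p.1 p.2) /\
           (forall y', u2 p.1 y' <= u2 p.1 p.2)].

Definition TNE : set (S1 * S2) :=
  [set p | (exists y, NE (p.1, y)) /\ (exists x, NE (x, p.2))].

(* maxima read as suprema *)
Definition opt_sw : R := sup [set sw p.1 p.2 | p in [set: S1 * S2]].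
Definition PoS : R := sup [set sw p.1 p.2 | p in NE] / opt_sw.
Definition PoTS : R := sup [set sw p.1 p.2 | p in TNE] / opt_sw.
End Game.

From mathcomp Require Import all_boot all_order all_algebra.
From mathcomp Require Import all_classical all_reals.
Import Order.TTheory GRing.Theory Num.Theory.
Local Open Scope classical_set_scope.
Local Open Scope ring_scope.

(* Every equilibrium lies in T(NE), so PoTS >= PoS.  Conversely, if (x, y) is
   in T(NE), then (x, y0) and (x0, y) are equilibria for some x0, y0; x0 is a
   best reply to y and y0 a best reply to x, so neither player loses by moving
   from (x, y) to (x0, y) resp. (x, y0), and the hypothesis bounds the welfare
   of (x, y) by that of one of these two equilibria.  Thus the equilibria are
   cofinal in T(NE) for the welfare, and the two suprema coincide. *)

Lemma sup_image_cofinal (R : realType) (T : Type) (f : T -> R) (A B : set T) :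
  B `<=` A -> (forall a, A a -> exists2 b, B b & f a <= f b) ->
  B !=set0 -> has_ubound (f @` A) ->
  sup (f @` A) = sup (f @` B).
Proof.
move=> BA cofinal [b Bb] ubA.
have ubB : has_ubound (f @` B) by apply: subset_has_ubound ubA; exact: image_subset.
have neA : f @` A !=set0 by exists (f b), b => //; apply: BA.
have neB : f @` B !=set0 by exists (f b), b.
apply/le_anti/andP; split; apply: sup_le => //.
- move=> _ [a Aa <-]; have [b' Bb' le_ab'] := cofinal a Aa.
  by exists (f b'); split => //; exists b'.
- move=> _ [b' Bb' <-]; exists (f b'); split => //.
  by exists b' => //; apply: BA.
Qed.

Section TwoPlayerGame.
Variables (R : realType) (S1 S2 : Type) (u1 u2 : S1 -> S2 -> R).

Lemma NE_sub_TNE : NE u1 u2 `<=` TNE u1 u2.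
Proof. by move=> [x y] NExy; split; [exists y | exists x]. Qed.

Hypothesis sw_le_deviation : forall (x x' : S1) (y y' : S2),
  u1 x y <= u1 x' y -> u2 x y <= u2 x y' ->
  sw u1 u2 x y <= sw u1 u2 x' y \/ sw u1 u2 x y <= sw u1 u2 x y'.

Lemma TNE_sw_le_NE p : TNE u1 u2 p ->
  exists2 q, NE u1 u2 q & sw u1 u2 p.1 p.2 <= sw u1 u2 q.1 q.2.
Proof.
case: p => x y [[y0 NExy0] [x0 NEx0y]] /=.
have le_u1 : u1 x y <= u1 x0 y by apply: NEx0y.1.
have le_u2 : u2 x y <= u2 x y0 by apply: NExy0.2.
by case: (sw_le_deviation _ _ _ _ le_u1 le_u2) => le_sw;
  [exists (x0, y) | exists (x, y0)].
Qed.

End TwoPlayerGame.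

Theorem proposition4 (R : realType) (S1 S2 : Type) (u1 u2 : S1 -> S2 -> R) :
  (* sw has a (finite) positive maximum/supremum over S1 x S2 *)
  has_ubound [set sw u1 u2 p.1 p.2 | p in [set: S1 * S2]] ->
  0 < opt_sw u1 u2 ->
  (* the solution set NE is nonempty *)
  NE u1 u2 !=set0 ->
  (forall (x x' : S1) (y y' : S2),
      u1 x y <= u1 x' y -> u2 x y <= u2 x y' ->
      sw u1 u2 x y <= sw u1 u2 x' y \/ sw u1 u2 x y <= sw u1 u2 x y') ->
  PoTS u1 u2 = PoS u1 u2.
Proof.
move=> ub_sw _ NE_neq0 sw_le_deviation.
rewrite /PoTS /PoS; congr (_ / _).
apply: sup_image_cofinal => //.
- exact: NE_sub_TNE.
- exact: TNE_sw_le_NE.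
- by apply: subset_has_ubound ub_sw; exact: image_subset.
Qed.
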